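(* Let $n>k\ge1$, $d\ge 2$, $J:=n-k-d+2\ge1$, and let $\mathcal{T}$ be a bipartite graph with $n$ variable nodes (VNs) and $n-k$ check nodes (CNs), whose CNs are partitioned into ''local'' CNs and ''global'' CNs such that (i) every local CN is adjacent to at least one VN that is not adjacent to any other local CN, and (ii) every global CN is adjacent to all $n$ VNs. If every set of $J$ local CNs is adjacent to at least $J+k$ VNs, then for every $\gamma\in[J,n-k]$ every set of $\gamma$ CNs of $\mathcal{T}$ is adjacent to at least $\gamma+k$ VNs; consequently, for all sufficiently large $q$ there is a matrix $\mathbf{H}\in\mathbb{F}_q^{(n-k)\times n}$ with Tanner graph $\mathcal{T}$ whose null space $\{\mathbf{y}:\mathbf{y}\mathbf{H}^T=\mathbf{0}\}$ has minimum distance at least $d$.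
   Context: The Tanner graph of $\mathbf{H}\in\mathbb{F}_q^{(n-k)\times n}$ has VNs $1,\dots,n$ and CNs $1,\dots,n-k$, with VN $i$ adjacent to CN $j$ iff $H_{j,i}\neq0$. $[a,b]=\{a,\dots,b\}$. *)

From HB Require Import structures.
From mathcomp Require Import all_boot all_order all_algebra.
Set Implicit Arguments. Unset Strict Implicit. Unset Printing Implicit Defensive.
Import GRing.Theory.
Local Open Scope ring_scope.

(* A bipartite graph with VNs 'I_n and CNs 'I_m is given by
   adj : 'I_m -> 'I_n -> bool, adj c v = "CN c adjacent to VN v". *)

Definition nbhd (m n : nat) (adj : 'I_m -> 'I_n -> bool) (S : {set 'I_m})
  : {set 'I_n} := [set v | [exists c in S, adj c v]].

Definition has_tanner_graph (F : fieldType) (m n : nat)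
  (H : 'M[F]_(m, n)) (adj : 'I_m -> 'I_n -> bool) : Prop :=
  forall (j : 'I_m) (i : 'I_n), (H j i != 0) = adj j i.

Definition hwt (F : fieldType) (n : nat) (y : 'rV[F]_n) : nat :=
  #|[set i : 'I_n | y 0 i != 0]|.

Definition nullspace_min_dist_ge (F : fieldType) (m n : nat)
  (H : 'M[F]_(m, n)) (d : nat) : Prop :=
  forall y : 'rV[F]_n, y *m H^T = 0 -> y != 0 -> (d <= hwt y)%N.

(* Expansion: deleting a local CN from a set of local CNs loses at least its
   private VN, so expansion by k climbs from sets of J local CNs to all larger
   sets, and a set containing a global CN sees every VN.
   Codes: give the edge (j, i) of the Tanner graph the entry t ^ (2 ^ r(j, i)),
   r an enumeration of the edges. If a nonzero word y of weight < d were in the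
   null space, expansion and Hall's theorem would match the support T of y into
   the CNs. The minor of the columns T along that matching is a polynomial in t in
   which the matching's monomial cannot cancel, because a sum of distinct powers
   of two determines the edges it comes from. Over a large field some t <> 0
   avoids the roots of all these polynomials, and then the columns T of H are
   independent. *)

From HB Require Import structures.
From mathcomp Require Import all_boot all_order all_algebra.
From mathcomp Require Import fingroup perm zify.
Set Implicit Arguments. Unset Strict Implicit. Unset Printing Implicit Defensive.
Import GRing.Theory.

Section HallMarriage.
Variables (I J : finType) (e : J -> I -> bool).

Definition nbhd_in (R : {set J}) (U : {set I}) : {set J} :=
  [set j in R | [exists i in U, e j i]].

Definition hall_cond (T : {set I}) (R : {set J}) : Prop :=
  forall U : {set I}, U \subset T -> #|U| <= #|nbhd_in R U|.

Definition matching_into (T : {set I}) (R : {set J}) (f : I -> J) : Prop :=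
  (forall i, i \in T -> (f i \in R) && e (f i) i) /\ {in T &, injective f}.

Lemma nbhd_in_sub R U : nbhd_in R U \subset R.
Proof. by apply/subsetP => j; rewrite inE => /andP[]. Qed.

Lemma eq_matching_into T R f g : f =1 g -> matching_into T R g -> matching_into T R f.
Proof.
by move=> fg [gT injg]; split=> [i | x y xT yT]; rewrite !fg; [apply: gT | apply: injg].
Qed.

Lemma matching_into_nbhd T R f : matching_into T R f -> matching_into T (nbhd_in R T) f.
Proof.
case=> fT injf; split=> // i iT; have /andP[fiR efi] := fT i iT.
by rewrite inE fiR efi andbT; apply/existsP; exists i; rewrite iT.
Qed.

Lemma matching_glue T (R R0 : {set J}) U0 f1 f2 : R0 \subset R ->
  matching_into U0 R0 f1 -> matching_into (T :\: U0) (R :\: R0) f2 ->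
  matching_into T R (fun i => if i \in U0 then f1 i else f2 i).
Proof.
move=> sR0R [f1U0 inj1] [f2T inj2].
have f1R0 i : i \in U0 -> f1 i \in R0 by move/f1U0 => /andP[].
have f2R0 i : i \in T -> i \notin U0 -> f2 i \notin R0.
  by move=> iT iU0; have := f2T i; rewrite !inE iU0 iT => /(_ isT) /andP[/andP[]].
split=> [i iT | x y xT yT /=].
  case: ifP => iU0; first by have /andP[/(subsetP sR0R) -> ->] := f1U0 i iU0.
  by have := f2T i; rewrite !inE iU0 iT => /(_ isT) /andP[/andP[_ ->] ->].
case: ifP => xU0; case: ifP => yU0.
- exact: inj1.
- by move=> E; have := f2R0 y yT; rewrite yU0 -E f1R0 // => /(_ isT).
- by move=> E; have := f2R0 x xT; rewrite xU0 E f1R0 // => /(_ isT).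
- by apply: inj2; rewrite inE ?xU0 ?yU0.
Qed.

Lemma hall_cond_tight T R (U0 : {set I}) : hall_cond T R -> U0 \subset T ->
  #|nbhd_in R U0| <= #|U0| -> hall_cond (T :\: U0) (R :\: nbhd_in R U0).
Proof.
move=> hall sU0T tight U; rewrite subsetD => /andP[sUT disj].
have := hall (U :|: U0); rewrite subUset sUT sU0T => /(_ isT).
rewrite cardsU (disjoint_setI0 disj) cards0 subn0.
have sub : nbhd_in R (U :|: U0) \subset nbhd_in (R :\: nbhd_in R U0) U :|: nbhd_in R U0.
  apply/subsetP => j; rewrite !inE => /andP[jR /existsP[i /andP[]]].
  rewrite inE => /orP[iU eji | iU0 eji]; last first.
    by rewrite jR /= orbC; apply/orP; left; apply/existsP; exists i; rewrite iU0.
  rewrite jR /= andbT; case: existsP => //= _; rewrite orbF.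
  by apply/existsP; exists i; rewrite iU.
have := subset_leq_card sub; rewrite cardsU; lia.
Qed.

Lemma hall_cond_slack T R i0 j : hall_cond T R -> i0 \in T ->
  (forall U, U != set0 -> U \proper T -> #|U| < #|nbhd_in R U|) ->
  hall_cond (T :\ i0) (R :\ j).
Proof.
move=> hall Ti0 slack U sU.
have [-> | Un0] := eqVneq U set0; first by rewrite cards0.
have pU : U \proper T.
  apply/properP; split; first exact: subset_trans sU (subsetDl _ _).
  by exists i0 => //; apply/negP => /(subsetP sU); rewrite !inE eqxx.
have sub : nbhd_in R U \subset j |: nbhd_in (R :\ j) U.
  by apply/subsetP => x; rewrite !inE => /andP[-> ->]; rewrite !andbT orbN.
have := slack U Un0 pU; have := subset_leq_card sub; rewrite cardsU1; lia.
Qed.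

Variable j0 : J.

Theorem hall_matching T R : hall_cond T R -> exists f, matching_into T R f.
Proof.
move: {2}#|T|.+1 (ltnSn #|T|) => N; elim: N T R => // N IH T R ltTN hall.
have [-> | [i0 Ti0]] := set_0Vmem T.
  by exists (fun=> j0); split=> // i; rewrite inE.
have hallS (U : {set I}) : U \subset T -> hall_cond U R.
  by move=> sUT V sVU; apply: hall; apply: subset_trans sUT.
case: (boolP [exists U : {set I}, [&& U != set0, U \proper T & #|nbhd_in R U| <= #|U|]]).
  case/existsP => U0 /and3P[U0n0 pU0T tight]; have sU0T := proper_sub pU0T.
  have [f1 m1] : exists f, matching_into U0 R f.
    by apply: IH (hallS _ sU0T); have := proper_card pU0T; lia.
  have [f2 m2] : exists f, matching_into (T :\: U0) (R :\: nbhd_in R U0) f.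
    apply: IH (hall_cond_tight hall sU0T tight).
    rewrite cardsD (setIidPr sU0T); have := proper_card pU0T; move: U0n0; rewrite -card_gt0; lia.
  by eexists; apply: matching_glue (nbhd_in_sub _ _) (matching_into_nbhd m1) m2.
move=> noTight.
have slack (U : {set I}) : U != set0 -> U \proper T -> #|U| < #|nbhd_in R U|.
  move=> Un0 pUT; rewrite ltnNge; apply/negP => le.
  by case/negP: noTight; apply/existsP; exists U; rewrite Un0 pUT le.
have := hall [set i0]; rewrite sub1set Ti0 cards1 card_gt0 => /(_ isT) /set0Pn[j].
rewrite inE => /andP[jR /existsP[i /andP[]]]; rewrite inE => /eqP-> eji0.
have [f' m'] : exists f, matching_into (T :\: [set i0]) (R :\: [set j]) f.
  by apply: IH (hall_cond_slack j hall Ti0 slack); rewrite (cardsD1 i0 T) Ti0 in ltTN.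
have m0 : matching_into [set i0] [set j] (fun=> j).
  by split=> [i1 /set1P-> | x y /set1P-> /set1P->]; rewrite ?inE ?eqxx.
by eexists; apply: matching_glue m0 m'; rewrite sub1set.
Qed.

End HallMarriage.

Lemma bit_sum_lt N (a : nat -> bool) : \sum_(c < N) a c * 2 ^ c < 2 ^ N.
Proof.
elim: N => [|N IH]; first by rewrite big_ord0.
rewrite big_ord_recr /= expnS.
have : a N * 2 ^ N <= 2 ^ N by case: (a N); rewrite ?mul1n ?mul0n.
move: IH; move: (\sum_(c < N) _) (a N * 2 ^ N) (2 ^ N) => x y z; lia.
Qed.

Lemma bit_sum_inj N (a b : nat -> bool) :
  \sum_(c < N) a c * 2 ^ c = \sum_(c < N) b c * 2 ^ c -> {in gtn N, a =1 b}.
Proof.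
elim: N => [//|N IH]; rewrite !big_ord_recr /= => E.
have abN : a N = b N.
  move: E (bit_sum_lt N a) (bit_sum_lt N b); case: (a N); case: (b N) => //=;
  by rewrite mul1n mul0n; move: (\sum_(c < N) _) (\sum_(c < N) _) (2 ^ N) => x y z; lia.
move=> c; rewrite unfold_in /= ltnS leq_eqVlt => /predU1P[-> // | ltcN].
by apply: IH ltcN; move: E; rewrite abN => /addIn.
Qed.

Lemma sum_pow2_set_inj N (A B : {set 'I_N}) :
  \sum_(c in A) 2 ^ c = \sum_(c in B) 2 ^ c -> A = B.
Proof.
pose bits (S : {set 'I_N}) c := c \in [seq val x | x <- enum S].
have sumE (S : {set 'I_N}) : \sum_(c in S) 2 ^ c = \sum_(c < N) bits S c * 2 ^ c.
  rewrite big_mkcond; apply: eq_bigr => c _.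
  by rewrite /bits (mem_map val_inj) mem_enum; case: (c \in S); rewrite ?mul1n ?mul0n.
rewrite !sumE => /bit_sum_inj eqAB; apply/setP => c.
by have := eqAB c (ltn_ord c); rewrite /bits !(mem_map val_inj) !mem_enum.
Qed.

Section Expansion.
Variables (m n k J : nat) (adj : 'I_m -> 'I_n -> bool) (loc : {set 'I_m}).
Hypothesis private_vn : forall c, c \in loc ->
  exists v, adj c v && [forall c' in loc, (c' != c) ==> ~~ adj c' v].
Hypothesis global_full : forall c, c \notin loc -> forall v, adj c v.
Implicit Types S : {set 'I_m}.
Hypothesis expansion_J : forall S, S \subset loc -> #|S| = J -> #|S| + k <= #|nbhd adj S|.

Lemma nbhd_setD1_proper S c : S \subset loc -> c \in S -> nbhd adj (S :\ c) \proper nbhd adj S.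
Proof.
move=> sSloc cS; have [v /andP[acv /forall_inP priv]] := private_vn (subsetP sSloc c cS).
apply/properP; split.
  apply/subsetP => x; rewrite !inE => /exists_inP[c' /setD1P[_ c'S] ac'x].
  by apply/exists_inP; exists c'.
exists v; first by rewrite inE; apply/exists_inP; exists c.
rewrite inE; apply/exists_inP => -[c' /setD1P[c'c c'S]].
by apply/negP; apply: (implyP (priv c' (subsetP sSloc c' c'S))).
Qed.

Lemma local_expansion S : S \subset loc -> J <= #|S| -> #|S| + k <= #|nbhd adj S|.
Proof.
move=> sSloc /subnK; move: (#|S| - J) => s; elim: s S sSloc => [|s IH] S sSloc cardS.
  exact: expansion_J.
have [c cS] : exists c, c \in S by apply/set0Pn; rewrite -card_gt0 -cardS addSn.
have := IH (S :\ c) (subset_trans (subsetDl _ _) sSloc).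
have := proper_card (nbhd_setD1_proper sSloc cS).
have := cardsD1 c S; rewrite cS -cardS; lia.
Qed.

Lemma expansion S : J <= #|S| -> #|S| + k <= n -> #|S| + k <= #|nbhd adj S|.
Proof.
move=> JS Skn; have [sSloc | /subsetPn[c cS cloc]] := boolP (S \subset loc).
  exact: local_expansion.
suff -> : nbhd adj S = setT by rewrite cardsT card_ord.
by apply/setP => v; rewrite !inE; apply/exists_inP; exists c => //; apply: global_full.
Qed.

End Expansion.

Local Open Scope ring_scope.

Lemma prod_if_expr (R : comPzSemiRingType) (I : finType) (a : pred I) (g : I -> nat) (x : R) :
  \prod_i (if a i then x ^+ g i else 0) = if [forall i, a i] then x ^+ (\sum_i g i)%N else 0.
Proof.
case: (boolP [forall i, a i]) => [/forallP allA | /forallPn[i /negbTE ai]].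
  by rewrite -prodrXr; apply: eq_bigr => i _; rewrite allA.
by rewrite (bigD1 i) //= ai mul0r.
Qed.

Lemma exists_nonroot (F : finFieldType) (p : {poly F}) :
  p != 0 -> (size p <= #|F|)%N -> exists t, ~~ root p t.
Proof.
move=> p0 sp; apply/existsP; apply: contraLR sp => /existsPn allroot.
rewrite -ltnNge cardE; apply: max_poly_roots p0 _ (enum_uniq _).
by apply/allP => t _; apply/negPn; apply: allroot.
Qed.

Section GenericMatrix.
Variables (F : fieldType) (m n : nat) (adj : 'I_m -> 'I_n -> bool).
Implicit Types (t : F) (T : {set 'I_n}) (f : 'I_n -> 'I_m) (s : 'S_n).

Definition edge_exp (j : 'I_m) (i : 'I_n) : nat := 2 ^ enum_rank (j, i).

Definition generic_mx t : 'M[F]_(m, n) :=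
  \matrix_(j, i) if adj j i then t ^+ edge_exp j i else 0.

Lemma generic_mx_tanner t : t != 0 -> has_tanner_graph (generic_mx t) adj.
Proof. by move=> t0 j i; rewrite mxE; case: (adj j i); rewrite ?expf_neq0 ?eqxx. Qed.

Definition matched_mx t T f : 'M[F]_n :=
  \matrix_(i, i') if (i \in T) && (i' \in T) then generic_mx t (f i) i' else (i == i')%:R.

Definition edge_perm T f s : bool :=
  [forall i, if i \in T then (s i \in T) && adj (f i) (s i) else s i == i].

Definition perm_exp T f s : nat := \sum_(i in T) edge_exp (f i) (s i).

Definition matched_poly T f : {poly F} :=
  \sum_(s | edge_perm T f s) (-1) ^+ s *: 'X^(perm_exp T f s).

Lemma det_matched_mx t T f : \det (matched_mx t T f) = (matched_poly T f).[t].
Proof.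
rewrite /determinant /matched_poly horner_sum [RHS]big_mkcond /=.
apply: eq_bigr => s _; rewrite hornerZ hornerXn.
have -> : \prod_i matched_mx t T f i (s i) =
  \prod_i (if (if i \in T then (s i \in T) && adj (f i) (s i) else s i == i)
           then t ^+ (if i \in T then edge_exp (f i) (s i) else 0) else 0).
  apply: eq_bigr => i _; rewrite !mxE.
  case iT: (i \in T) => /=; last by rewrite eq_sym; case: eqP.
  by case siT: (s i \in T) => //=; case: eqP => // sii; rewrite -sii iT in siT.
by rewrite prod_if_expr -big_mkcond /edge_perm /perm_exp; case: forallP; rewrite ?mulr0.
Qed.

Lemma coef_matched_poly T f j :
  (matched_poly T f)`_j = \sum_(s | edge_perm T f s) (-1) ^+ s * (j == perm_exp T f s)%:R.
Proof. by rewrite coef_sum; apply: eq_bigr => s _; rewrite coefZ coefXn. Qed.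

(* Distinct edges have distinct powers of two as exponents, so a permutation is
   determined by the set of edges it uses, hence by its exponent. *)
Lemma perm_exp_inj T f s : {in T &, injective f} -> edge_perm T f s ->
  perm_exp T f s = perm_exp T f 1 -> s = 1%g.
Proof.
move=> injf /forallP sT.
pose edges s' := [set enum_rank (f i, s' i) | i in T].
have expE s' : perm_exp T f s' = (\sum_(c in edges s') 2 ^ c)%N.
  by rewrite big_imset //= => x y _ _ /enum_rank_inj[_ /perm_inj].
rewrite !expE => /sum_pow2_set_inj eq_edges; apply/permP => i; rewrite perm1.
move: (sT i); case: ifP => [iT _ | _ /eqP //].
have : enum_rank (f i, s i) \in edges 1%g by rewrite -eq_edges; apply: imset_f.
case/imsetP => i' i'T /enum_rank_inj[fii']; rewrite perm1 => ->.
by apply: injf; rewrite // -(perm1 i').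
Qed.

Lemma edge_perm1 T f : matching_into adj T setT f -> edge_perm T f 1.
Proof.
case=> adjf _; apply/forallP => i; rewrite perm1.
by case: ifP => [iT | _]; rewrite ?iT //=; have /andP[] := adjf i iT.
Qed.

Lemma matched_poly_neq0 T f : matching_into adj T setT f -> matched_poly T f != 0.
Proof.
move=> mf; apply/eqP => /(congr1 (coefp (perm_exp T f 1))) /=; apply/eqP.
rewrite coef0 coef_matched_poly (bigD1 1%g) ?edge_perm1 //= odd_perm1 expr0 mul1r eqxx.
rewrite big1 ?addr0 ?oner_neq0 // => s /andP[sT s1].
case: eqP => [exp1 | _]; last by rewrite mulr0.
by case/eqP: s1; apply: perm_exp_inj mf.2 sT _.
Qed.

Lemma size_matched_poly T f : (size (matched_poly T f) <= (n * 2 ^ #|{: 'I_m * 'I_n}|).+1)%N.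
Proof.
apply/leq_sizeP => j ltj; rewrite coef_matched_poly big1 // => s _.
suff /gtn_eqF -> : (perm_exp T f s < j)%N by rewrite mulr0.
apply: leq_trans ltj; rewrite ltnS.
apply: (@leq_trans (\sum_(i in T) 2 ^ #|{: 'I_m * 'I_n}|)%N).
  by apply: leq_sum => i _; rewrite leq_pexp2l // ltnW.
by rewrite sum_nat_const leq_mul2r -[X in (_ <= X)%N](card_ord n) max_card orbT.
Qed.

Lemma matched_mx_kernel t T f (y : 'rV[F]_n) : (forall i, i \notin T -> y 0 i = 0) ->
  y *m (generic_mx t)^T = 0 -> y *m (matched_mx t T f)^T = 0.
Proof.
move=> ysupp yH; apply/rowP => i; rewrite !mxE.
case iT: (i \in T).
  have := congr1 (fun M : 'rV_m => M 0 (f i)) yH; rewrite !mxE; apply: etrans.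
  apply: eq_bigr => i' _; rewrite !mxE iT /=.
  by case i'T: (i' \in T) => //; rewrite ysupp ?i'T // !mul0r.
rewrite (bigD1 i) //= big1 => [|i' i'i]; rewrite !mxE iT /=.
  by rewrite eqxx ysupp ?iT // mul0r addr0.
by rewrite eq_sym (negbTE i'i) mulr0.
Qed.

Lemma generic_mx_kernel_support t T f (y : 'rV[F]_n) : (matched_poly T f).[t] != 0 ->
  (forall i, i \notin T -> y 0 i = 0) -> y *m (generic_mx t)^T = 0 -> y = 0.
Proof.
rewrite -det_matched_mx -det_tr -unitfE -unitmxE => unitB ysupp yH.
by rewrite -(mulmxK unitB y) (matched_mx_kernel f ysupp yH) mul0mx.
Qed.

End GenericMatrix.

Arguments matched_poly {F m n} adj T f.

Section GenericPoint.
Variables (m n : nat) (adj : 'I_m -> 'I_n -> bool).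

Definition matchingb (T : {set 'I_n}) (f : 'I_n -> 'I_m) : bool :=
  [forall i in T, adj (f i) i] && dinjectiveb f T.

Lemma matchingbP T f : reflect (matching_into adj T setT f) (matchingb T f).
Proof.
apply: (iffP andP) => [[/forall_inP adjf /dinjectiveP injf] | [adjf injf]].
  by split=> // i /adjf; rewrite in_setT.
by split; [apply/forall_inP => i /adjf; rewrite in_setT | apply/dinjectiveP].
Qed.

Definition generic_bound : nat :=
  (#|{: {set 'I_n} * {ffun 'I_n -> 'I_m}}| * (n * 2 ^ #|{: 'I_m * 'I_n}|).+1).+2.

Lemma exists_generic_point (F : finFieldType) : (generic_bound <= #|F|)%N ->
  exists2 t : F, t != 0 & forall T (f : {ffun 'I_n -> 'I_m}),
    matching_into adj T setT f -> (matched_poly adj T f).[t] != 0.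
Proof.
move=> bound.
pose P : {poly F} :=
  'X * \prod_(p : {set 'I_n} * {ffun 'I_n -> 'I_m} | matchingb p.1 p.2) matched_poly adj p.1 p.2.
have P0 : P != 0.
  rewrite mulf_neq0 ?polyX_eq0 //; apply/prodf_neq0 => p /matchingbP.
  exact: matched_poly_neq0.
have [|t] := exists_nonroot P0.
  apply: leq_trans bound; apply: leq_trans (size_polyMleq _ _) _.
  rewrite size_polyX add2n /= ltnS.
  apply: leq_trans (size_poly_prod_leq _ _) _; apply: leq_trans (leq_subr _ _) _.
  rewrite ltnS big_mkcond /= -sum_nat_const; apply: leq_sum => p _.
  by case: ifP => // _; apply: size_matched_poly.
rewrite /root hornerM hornerX mulf_eq0 negb_or horner_prod => /andP[t0 /prodf_neq0 nz].
by exists t => // T f /matchingbP mf; apply: (nz (T, f)).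
Qed.

End GenericPoint.

(* If U had fewer CN neighbours than elements, the other CNs would form a set of
   at least n - k + 2 - d CNs whose neighbourhood misses U, too small to expand. *)
Lemma hall_cond_small_support (n k d : nat) (adj : 'I_(n - k) -> 'I_n -> bool) :
  (k <= n)%N ->
  (forall S : {set 'I_(n - k)}, ((n - k + 2) - d <= #|S|)%N -> (#|S| + k <= #|nbhd adj S|)%N) ->
  forall T : {set 'I_n}, (#|T| < d)%N -> hall_cond adj T setT.
Proof.
move=> lekn expand T ltTd U sUT; rewrite leqNgt; apply/negP => ltNU.
pose S := ~: nbhd_in adj setT U.
have sub : nbhd adj S \subset ~: U.
  apply/subsetP => v; rewrite !inE => /exists_inP[c]; rewrite !inE => cN acv.
  by apply: contra cN => vU; apply/exists_inP; exists v.
have := subset_leq_card sub; have := leq_ltn_trans (subset_leq_card sUT) ltTd.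
have := cardsC U; have := cardsC (nbhd_in adj setT U); rewrite !cardT !size_enum_ord -/S.
(* The cardinals occur in convertible but syntactically different forms, which
   lia would treat as unrelated atoms; naming them identifies the forms. *)
set cS := #|S|; set cN := #|nbhd_in _ _ _|; set cU := #|U|; set cUc := #|~: U|.
move=> cardN cardU ltUd; have /expand : ((n - k + 2) - d <= #|S|)%N by rewrite -/cS; lia.
rewrite -/cS; set cnS := #|nbhd adj S|; lia.
Qed.

Theorem corollary1 (n k d : nat)
  (adj : 'I_(n - k) -> 'I_n -> bool) (loc : {set 'I_(n - k)}) :
  (k < n)%N -> (1 <= k)%N -> (2 <= d)%N -> (1 <= (n - k + 2) - d)%N ->
  (forall c, c \in loc ->
     exists v : 'I_n, adj c v && [forall c' in loc, (c' != c) ==> ~~ adj c' v]) ->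
  (forall c, c \notin loc -> forall v : 'I_n, adj c v) ->
  (forall S : {set 'I_(n - k)}, S \subset loc -> #|S| = ((n - k + 2) - d)%N ->
     (#|S| + k <= #|nbhd adj S|)%N) ->
  (forall gamma : nat, ((n - k + 2) - d <= gamma)%N -> (gamma <= n - k)%N ->
     forall S : {set 'I_(n - k)}, #|S| = gamma -> (gamma + k <= #|nbhd adj S|)%N)
  /\
  (exists Q : nat, forall F : finFieldType, (Q <= #|F|)%N ->
     exists H : 'M[F]_(n - k, n),
       has_tanner_graph H adj /\ nullspace_min_dist_ge H d).
Proof.
move=> ltkn _ _ _ private_vn global_full expansion_J.
have expand (S : {set 'I_(n - k)}) :
    ((n - k + 2) - d <= #|S|)%N -> (#|S| + k <= #|nbhd adj S|)%N.
  move=> JS; apply: (expansion private_vn global_full expansion_J JS).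
  by have := max_card S; rewrite card_ord; lia.
split=> [gamma Jgamma _ S cardS | ]; first by rewrite -cardS; apply: expand; rewrite cardS.
exists (generic_bound (n - k) n) => F bound.
have [t t0 generic_t] := exists_generic_point adj bound.
exists (generic_mx adj t); split=> [|y yH y0]; first exact: generic_mx_tanner.
rewrite leqNgt; apply/negP => small_support.
have j0 : 'I_(n - k) by exists 0%N; lia.
have [f matching_f] :=
  hall_matching j0 (hall_cond_small_support (ltnW ltkn) expand small_support).
have /generic_t generic_f := eq_matching_into (@ffunE _ _ f) matching_f.
case/eqP: y0; apply: generic_mx_kernel_support generic_f _ yH => i.
by rewrite inE negbK => /eqP.
Qed.
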